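(* Let $\mu:\mathbb{R}^{n\times n}\to\mathbb{R}$ be the matrix measure induced by a vector norm $|\cdot|$ on $\mathbb{R}^n$. The following four conditions are equivalent: (1) the norm $|\cdot|$ inducing $\mu$ is orthant-monotonic; (2) $\mu$ is admissible, i.e. $\mu(-D)\le 0$ for every $D\in\mathbb{D}^n_{\ge 0}$; (3) $\mu(D)=\max_i\{d_{ii}\}$ for every $D\in\mathbb{D}^n_{\ge 0}$; (4) there exists a matrix $A\in\mathbb{R}^{n\times n}$ such that $\mu(A-D)<0$ for all $D\in\mathbb{D}^n_{\ge 0}$.
   Context: $\mathbb{D}^n_{\ge 0}$ denotes the set of $n\times n$ diagonal matrices with nonnegative diagonal entries $d_{ii}$. For a vector norm $|\cdot|$ on $\mathbb{R}^n$, the induced matrix norm is $\|A\|=\max_{|x|=1}|Ax|$ and the induced matrix measure (logarithmic norm) is $\mu(A)=\lim_{\varepsilon\to0^+}(\|I_n+\varepsilon A\|-1)/\varepsilon$. A norm $|\cdot|$ on $\mathbb{R}^n$ is orthant-monotonic if for all $x,y\in\mathbb{R}^n$: whenever $x_iy_i\ge 0$ and $|x_i|\le|y_i|$ (absolute values) for all $i$, then $|x|\le|y|$. *)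

From HB Require Import structures.
From mathcomp Require Import all_boot all_order all_algebra.
From mathcomp Require Import all_classical all_reals all_analysis.
Set Implicit Arguments. Unset Strict Implicit. Unset Printing Implicit Defensive.
Import Order.TTheory GRing.Theory Num.Theory.
Import numFieldNormedType.Exports.
Local Open Scope classical_set_scope.
Local Open Scope ring_scope.

Definition is_vnorm (R : realType) (n : nat) (N : 'cV[R]_n -> R) : Prop :=
  [/\ forall x, 0 <= N x,
      forall x, N x = 0 -> x = 0,
      forall (a : R) x, N (a *: x) = `|a| * N x
    & forall x y, N (x + y) <= N x + N y].

(* Induced matrix norm ||A|| = max_{|x| = 1} |A x| (written as a sup; it is attained). *)
Definition induced_norm (R : realType) (n : nat) (N : 'cV[R]_n -> R)
  (A : 'M[R]_n) : R :=
  sup [set N (A *m x) | x in [set x | N x = 1]].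

Definition matrix_measure (R : realType) (n : nat) (N : 'cV[R]_n -> R)
  (A : 'M[R]_n) : R :=
  lim ((fun eps : R => (induced_norm N (1%:M + eps *: A) - 1) / eps) @ 0^'+).

Definition orthant_monotonic (R : realType) (n : nat) (N : 'cV[R]_n -> R) : Prop :=
  forall x y : 'cV[R]_n,
    (forall i, 0 <= x i 0 * y i 0 /\ `|x i 0| <= `|y i 0|) -> N x <= N y.

Definition diag_nonneg (R : realType) (n : nat) (D : 'M[R]_n) : Prop :=
  (forall i j, i != j -> D i j = 0) /\ (forall i, 0 <= D i i).

(* max_i d_ii (entries are nonnegative here, so 0 as neutral element is harmless). *)
Definition max_diag (R : realType) (n : nat) (D : 'M[R]_n) : R :=
  \big[Num.max/0]_(i < n) D i i.

From HB Require Import structures.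
From mathcomp Require Import all_boot all_order all_algebra.
From mathcomp Require Import all_classical all_reals all_analysis.
From mathcomp Require Import ring lra.
Set Implicit Arguments. Unset Strict Implicit. Unset Printing Implicit Defensive.
Import Order.TTheory GRing.Theory Num.Theory.
Import numFieldNormedType.Exports.
Local Open Scope classical_set_scope.
Local Open Scope ring_scope.

(** If [N] is orthant-monotonic and [D = diag(d_i) >= 0], then [(I + D) x] is
    dominated coordinatewise by [(1 + max d_i) x], so [||I + D|| <= 1 + max d_i];
    testing [I + e D] on the basis vector [e_i] gives [mu(D) >= d_i].  Subadditivity
    and positive homogeneity of [mu], together with [mu(a I) = a], give the easy
    implications between (2), (3) and (4).  All these properties come from
    [mu(A) = inf_{e > 0} (||I + e A|| - 1) / e], the quotient being nondecreasing in
    [e] by convexity of the induced norm.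

    For (2) => (1), orthant monotonicity reduces to [||Q_i(u)|| <= 1] for the
    coordinate scalings [Q_i(u) = diag(1, .., u, .., 1)], [0 <= u <= 1].  They form a
    multiplicative semigroup, so [Q_i(u) = Q_i(v)^k] with [v = u^(1/k)], while
    [mu(- E_ii) <= 0] means [||Q_i(v)|| <= 1 + o(1 - v)] as [v -> 1].  Since
    [k (1 - v)] stays bounded, letting [k -> oo] yields [||Q_i(u)|| <= 1]. *)

Section BernoulliInequality.
Variable R : realDomainType.
Implicit Types (a x : R) (k : nat).

Lemma bernoulli_ineq x k : -1 <= x -> 1 + k%:R * x <= (1 + x) ^+ k.
Proof.
move=> x1; elim: k => [|k IH]; first by rewrite mul0r addr0 expr0.
rewrite exprS -natr1; have x10 : 0 <= 1 + x by lra.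
have := ler_wpM2l x10 IH; have : 0 <= k%:R * x ^+ 2 by rewrite mulr_ge0 ?sqr_ge0.
rewrite expr2; nra.
Qed.

Lemma exprD1_mul_le1 a k : -1 <= a <= 1 -> (1 + a) ^+ k * (1 - k%:R * a) <= 1.
Proof.
move=> /andP[a1 a2].
have Ba : 1 - k%:R * a <= (1 - a) ^+ k.
  by rewrite -mulrN bernoulli_ineq // lerNr opprK.
apply: le_trans (ler_wpM2l _ Ba) _; first by rewrite exprn_ge0 //; lra.
by rewrite -exprMn exprn_ile1 //; nra.
Qed.

End BernoulliInequality.

Section PowerBounds.
Variable R : realType.
Implicit Types (u v : R) (k : nat).

Lemma root_in_unit_interval u k : 0 < u < 1 -> (0 < k)%N ->
  exists2 v, 0 < v < 1 & v ^+ k = u.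
Proof.
move=> /andP[u0 u1] k0; set v := u `^ k%:R^-1.
have vk : v ^+ k = u.
  by rewrite -powR_mulrn ?powR_ge0 // -powRrM mulVf ?pnatr_eq0 -?lt0n // powRr1 ?ltW.
exists v => //; rewrite powR_gt0 //=; rewrite ltNge; apply/negP => v1.
by have := exprn_ege1 k v1; rewrite vk; lra.
Qed.

(* Writing [u = v ^+ k] with [v] close to [1], one has [k (1 - v) <= (1 - u) / u =: c],
   hence [h u <= (1 + d (1 - v)) ^+ k <= 1 / (1 - d c)] for every small [d > 0]. *)
Lemma le1_of_pow_submul (h : R -> R) :
  (forall v, 0 <= h v) ->
  (forall v k, h (v ^+ k) <= h v ^+ k) ->
  (forall d, 0 < d -> exists2 e, 0 < e &
     forall v, 1 - e <= v -> v < 1 -> h v <= 1 + d * (1 - v)) ->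
  forall u, 0 < u < 1 -> h u <= 1.
Proof.
move=> h0 hpow hnear u /andP[u0 u1]; set c := (1 - u) / u.
have c0 : 0 < c by rewrite divr_gt0 // subr_gt0.
have key d : 0 < d -> d * c <= 1 -> h u * (1 - d * c) <= 1.
  move=> d0 dc1; have [e e0 He] := hnear d d0.
  set k := (Num.truncn (c / e)).+1.
  have ck : c / e < k%:R by apply: truncnS_gt.
  have [v /andP[v0 v1] vk] := @root_in_unit_interval u k (ltac:(by rewrite u0 u1)) (ltn0Sn _).
  have gap : k%:R * (1 - v) <= c.
    have := @exprD1_mul_le1 _ (v - 1) k; rewrite subrKC vk /c ler_pdivlMr //.
    by move=> /(_ ltac:(apply/andP; split; lra)); nra.
  have vc : 1 - v <= c.
    by apply: le_trans gap; rewrite ler_peMl ?ler1n // subr_ge0 ltW.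
  have x1 : d * (1 - v) <= 1 by apply: le_trans dc1; rewrite ler_pM2l.
  have ve : 1 - e <= v.
    have cke : c < k%:R * e by rewrite -ltr_pdivrMr.
    have k0 : 0 < k%:R :> R by rewrite ltr0n.
    by rewrite lerBlDr -lerBlDl ltW // -(ltr_pM2l k0); lra.
  set x := d * (1 - v).
  have x0 : 0 <= x by rewrite mulr_ge0 ?subr_ge0 ?ltW.
  have kx : k%:R * x <= d * c by rewrite mulrCA ler_pM2l.
  have hux : h u <= (1 + x) ^+ k.
    by rewrite -vk; apply: le_trans (hpow v k) _; rewrite lerXn2r ?nnegrE ?He //; lra.
  apply: le_trans (_ : h u * (1 - k%:R * x) <= _).
    by rewrite ler_wpM2l ?h0 // lerD2l lerN2.
  have x11 : -1 <= x <= 1 by apply/andP; split; [lra | exact: x1].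
  apply: le_trans (exprD1_mul_le1 k x11).
  by rewrite ler_wpM2r // subr_ge0; lra.
rewrite leNgt; apply/negP => hu1; set w := (h u)^-1.
have hw : h u * w = 1 by rewrite mulfV // gt_eqF // (lt_trans ltr01).
have w0 : 0 < w by rewrite invr_gt0 (lt_trans ltr01).
have w1 : w < 1 by rewrite invf_lt1 // (lt_trans ltr01).
set d := (1 - w) / (2 * c).
have dcE : d * c = (1 - w) / 2 by rewrite /d; field; rewrite gt_eqF.
have d0 : 0 < d by apply: divr_gt0; [rewrite subr_gt0 | apply: mulr_gt0].
have := key d d0; rewrite dcE; nra.
Qed.

End PowerBounds.

(** * Coordinate scalings and diagonal matrices *)

Section CoordScale.
Variables (R : pzRingType) (n : nat).
Implicit Types (u v : R) (x : 'cV[R]_n).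

Definition coord_scale (i : 'I_n) u : 'M[R]_n := diag_mx (\row_j (if j == i then u else 1)).

Lemma coord_scaleE i u : coord_scale i u = 1%:M + (u - 1) *: delta_mx i i.
Proof.
apply/matrixP => j k; rewrite !mxE.
have [<-|jk] := eqVneq j k; first by case: eqP; rewrite ?mulr1 ?mulr0 ?addr0 ?subrKC.
by rewrite /= mulr0n add0r; case: eqP => [ji|_]; rewrite ?mulr0 // -ji eq_sym (negPf jk) mulr0.
Qed.

Lemma coord_scale1 i : coord_scale i 1 = 1%:M.
Proof. by rewrite coord_scaleE subrr scale0r addr0. Qed.

Lemma coord_scaleM i u v : coord_scale i u *m coord_scale i v = coord_scale i (u * v).
Proof.
by rewrite mulmx_diag; congr diag_mx; apply/rowP => j; rewrite !mxE; case: eqP; rewrite ?mulr1.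
Qed.

Lemma coord_scale_mul i u x j :
  (coord_scale i u *m x) j 0 = if j == i then u * x j 0 else x j 0.
Proof. by rewrite mul_diag_mx !mxE; case: eqP; rewrite ?mul1r. Qed.

End CoordScale.

Lemma orthant_monotonic_coord_scale (R : realType) n (N : 'cV[R]_n -> R) :
  (forall i u x, 0 <= u <= 1 -> N (coord_scale i u *m x) <= N x) -> orthant_monotonic N.
Proof.
move=> Nscale x y xy.
pose z k : 'cV[R]_n := \col_j (if (j < k)%N then x j 0 else y j 0).
have zS k (kn : (k < n)%N) : N (z k.+1) <= N (z k).
  set i := Ordinal kn; have [xy0 xy1] := xy i; set r := x i 0 / y i 0.
  (* Also when [y_i = 0], as then [x_i = 0 = r]. *)
  have rxy : r * y i 0 = x i 0.
    have [y0|y0] := eqVneq (y i 0) 0; last by rewrite divfK.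
    by move: xy1; rewrite y0 mulr0 normr0 normr_le0 => /eqP.
  have r01 : 0 <= r <= 1.
    have [y0|y0] := eqVneq (y i 0) 0; first by rewrite /r y0 invr0 mulr0 lexx ler01.
    apply/andP; split.
      by rewrite (_ : r = x i 0 * y i 0 / y i 0 ^+ 2) ?divr_ge0 ?sqr_ge0 // /r; field.
    by rewrite (le_trans (ler_norm _)) // normrM normfV ler_pdivrMr ?normr_gt0 // mul1r.
  suff -> : z k.+1 = coord_scale i r *m z k by exact: Nscale.
  apply/matrixP => j l; rewrite (ord1 l) coord_scale_mul !mxE ltnS leq_eqVlt.
  case: (j =P i) => [->|ji] /=; first by rewrite eqxx ltnn rxy.
  by rewrite (_ : (j == k :> nat) = false) //; apply/eqP => jk; apply: ji; apply: val_inj.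
have zn : z n = x by apply/matrixP => j l; rewrite (ord1 l) mxE ltn_ord.
have z0 : z 0%N = y by apply/matrixP => j l; rewrite (ord1 l) mxE.
have zle k : (k <= n)%N -> N (z k) <= N (z 0%N).
  by elim: k => // k IH kn; apply: le_trans (zS k kn) (IH (ltnW kn)).
by rewrite -zn -z0 zle.
Qed.

Lemma mul_diag_col (R : pzRingType) n (D : 'M[R]_n) (x : 'cV[R]_n) i :
  is_diag_mx D -> (D *m x) i 0 = D i i * x i 0.
Proof.
move=> /is_diag_mxP Ddiag; rewrite mxE (bigD1 i) //= big1 ?addr0 // => j ji.
by rewrite Ddiag ?mul0r // eq_sym.
Qed.

Lemma diag_nonneg_delta (R : realType) n (i : 'I_n) : diag_nonneg (delta_mx i i : 'M[R]_n).
Proof.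
split=> [j k jk|j]; rewrite mxE; last by case: (_ && _).
by case: eqP => [ji|//]; case: eqP => [ki|]; rewrite ?andbF //; case/eqP: jk; rewrite ji ki.
Qed.

Lemma max_diag_ge (R : realType) n (D : 'M[R]_n) i : D i i <= max_diag D.
Proof. exact: (le_bigmax _ (fun i => D i i)). Qed.

Lemma max_diag_le (R : realType) n (D : 'M[R]_n) c :
  0 <= c -> (forall i, D i i <= c) -> max_diag D <= c.
Proof. by move=> c0 Dc; apply: bigmax_le. Qed.

(** * Norms, induced norms and the matrix measure *)

Lemma col_sum_delta (R : pzRingType) n (x : 'cV[R]_n) : x = \sum_j x j 0 *: delta_mx j 0.
Proof. by rewrite {1}(matrix_sum_delta x); apply: eq_bigr => j _; rewrite big_ord1. Qed.

Lemma mx_norm_entry (R : realType) m p (A : 'M[R]_(m, p)) (i : 'I_m) (j : 'I_p) :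
  `|A i j| <= `|A|.
Proof.
have /mapP[k _ ->] : `|A i j| \in [seq `|A k.1 k.2| | k : 'I_m * 'I_p].
  by apply/mapP; exists (i, j); rewrite ?mem_enum.
by rewrite [leRHS]/Num.Def.normr /= mx_normrE; apply/bigmax_geP; right; exists k.
Qed.

Section MatrixMeasure.
Variables (R : realType) (n : nat) (N : 'cV[R]_n -> R).
Hypothesis hN : is_vnorm N.
Implicit Types (x y : 'cV[R]_n) (A M : 'M[R]_n).

Lemma vnorm_ge0 x : 0 <= N x. Proof. by case: hN. Qed.
Lemma vnorm_eq0 x : N x = 0 -> x = 0. Proof. by case: hN => _ + _ _; apply. Qed.
Lemma vnormZ a x : N (a *: x) = `|a| * N x. Proof. by case: hN. Qed.
Lemma vnormD x y : N (x + y) <= N x + N y. Proof. by case: hN. Qed.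

Lemma vnorm0 : N 0 = 0.
Proof. by rewrite -(scale0r 0) vnormZ normr0 mul0r. Qed.

Lemma vnormN x : N (- x) = N x.
Proof. by rewrite -scaleN1r vnormZ normrN normr1 mul1r. Qed.

Lemma vnorm_gt0 x : x != 0 -> 0 < N x.
Proof. by move=> x0; rewrite lt_def vnorm_ge0 andbT; apply: contra_neq x0 => /vnorm_eq0. Qed.

Lemma vnorm_sum (I : finType) (a : I -> R) (v : I -> 'cV[R]_n) :
  N (\sum_i a i *: v i) <= \sum_i `|a i| * N (v i).
Proof.
elim/big_rec2: _ => [|j y1 y2 _ IH]; first by rewrite vnorm0.
by apply: le_trans (vnormD _ _) _; rewrite vnormZ lerD2l.
Qed.

Lemma vnorm_dist x y : `|N x - N y| <= N (x - y).
Proof.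
have := vnormD (x - y) y; have := vnormD (y - x) x.
rewrite !subrK -opprB vnormN ler_norml => h1 h2; apply/andP; split; lra.
Qed.

Let Nt (v : 'rV[R]_n) := N v^T.

Let Nt_le v : Nt v <= `|v| * \sum_j N (delta_mx j 0).
Proof.
rewrite /Nt {1}(col_sum_delta v^T) mulr_sumr; apply: le_trans (vnorm_sum _ _) _.
apply: ler_sum => j _; apply: ler_wpM2r; first exact: vnorm_ge0.
by rewrite mxE mx_norm_entry.
Qed.

Let Nt_continuous : continuous Nt.
Proof.
move=> v; apply/(@cvgrPdist_lt _ _ _ (nbhs v) (nbhs_filter v)) => e e0.
set C := \sum_j N (delta_mx j 0).
have C0 : 0 <= C by apply: sumr_ge0 => j _; apply: vnorm_ge0.
have d0 : 0 < e / (C + 1) by rewrite divr_gt0 // ltr_wpDl.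
near=> u.
apply: le_lt_trans (vnorm_dist _ _) _; rewrite -linearB /=.
apply: le_lt_trans (Nt_le _) _.
have : `|v - u| < e / (C + 1).
  near: u; have := @near_ball _ _ v _ d0; apply: filterS => u.
  by rewrite -ball_normE.
rewrite ltr_pdivlMr ?ltr_wpDl //; apply: le_lt_trans.
by apply: ler_wpM2l => //; rewrite lerDl.
Unshelve. all: by end_near.
Qed.

(* [N] is bounded below on the compact unit sphere of the max norm; compactness is
   available for row vectors, hence the transposition. *)
Lemma vnorm_coord_le : exists2 c, 0 < c & forall (x : 'cV[R]_n) i, `|x i 0| <= c * N x.
Proof.
pose S := [set v : 'rV[R]_n | `|v| = 1].
have cS : compact S.
  apply: bounded_closed_compact; first by exists 1; split => // M M1 v /= ->; exact: ltW.
  apply: (@preimage_closed _ _ (fun v : 'rV[R]_n => `|v|) [set x : R | x = 1]).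
    by move=> v _; exact: norm_continuous.
  exact: closed_eq.
have cK := continuous_compact (continuous_subspaceT Nt_continuous) cS.
have K0 : ~ (Nt @` S) 0.
  case=> v Sv /vnorm_eq0 /(congr1 trmx); rewrite trmxK trmx0 => v0.
  by move: Sv; rewrite /S /= v0 normr0 => /esym/eqP; rewrite oner_eq0.
have /nbhs_ballP[e /= e0 He] : nbhs (0 : R) (~` (Nt @` S)).
  exact: (closed_openC (compact_closed (@norm_hausdorff _ _) cK)).
have Se v : S v -> e <= Nt v.
  move=> Sv; rewrite leNgt; apply/negP => Nve; apply: (He (Nt v)); last by exists v.
  by rewrite -ball_normE /ball_ /= sub0r normrN ger0_norm ?vnorm_ge0.
exists e^-1; first by rewrite invr_gt0.
move=> x i; have -> : x i 0 = x^T 0 i by rewrite mxE.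
apply: le_trans (mx_norm_entry x^T 0 i) _.
have [->|x0] := eqVneq x 0; first by rewrite trmx0 normr0 vnorm0 mulr0.
have nx : 0 < `|x^T| by rewrite normr_gt0 -trmx0 (inj_eq trmx_inj).
have := Se (`|x^T|^-1 *: x^T); rewrite /S /Nt /= normrZ normfV normr_id mulVf ?gt_eqF //.
rewrite linearZ /= trmxK vnormZ normfV normr_id ler_pdivlMl // => /(_ erefl).
by rewrite ler_pdivlMl // mulrC.
Qed.


Lemma vnorm_mulmx_bounded M : exists B, forall x, N (M *m x) <= B * N x.
Proof.
have [c c0 Hc] := vnorm_coord_le.
exists (c * \sum_j N (M *m delta_mx j 0)) => x.
rewrite {1}(col_sum_delta x) mulmx_sumr.
under eq_bigr do rewrite -scalemxAr.
apply: le_trans (vnorm_sum _ _) _.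
rewrite mulr_sumr mulr_suml; apply: ler_sum => j _.
by rewrite mulrAC; apply: ler_wpM2r; [exact: vnorm_ge0 | exact: Hc].
Qed.

(* For [n = 0] the unit sphere of [N] is empty and [induced_norm] is the junk value
   [sup set0 = 0]. *)
Hypothesis hn : (0 < n)%N.

Let basis0 : 'cV[R]_n := delta_mx (Ordinal hn) 0.
Let unit0 := (N basis0)^-1 *: basis0.

Let vnorm_unit0 : N unit0 = 1.
Proof.
have basis0_neq0 : basis0 != 0.
  by apply/eqP => /matrixP /(_ (Ordinal hn) 0); rewrite !mxE !eqxx => /eqP; rewrite oner_eq0.
by rewrite vnormZ normfV ger0_norm ?vnorm_ge0 // mulVf // gt_eqF // vnorm_gt0.
Qed.

Local Notation nrm := (induced_norm N).

Let induced_norm_has_sup M : has_sup [set N (M *m x) | x in [set x | N x = 1]].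
Proof.
split; first by exists (N (M *m unit0)), unit0.
have [B HB] := vnorm_mulmx_bounded M.
by exists B => _ [x /= x1 <-]; apply: le_trans (HB x) _; rewrite x1 mulr1.
Qed.

Lemma induced_norm_ub M x : N x = 1 -> N (M *m x) <= nrm M.
Proof. by move=> x1; apply: ub_le_sup (induced_norm_has_sup M).2 _ _; exists x. Qed.

Lemma induced_norm_le M c : (forall x, N x = 1 -> N (M *m x) <= c) -> nrm M <= c.
Proof. by move=> H; apply: ge_sup; [exists (N (M *m unit0)), unit0 | move=> _ [x /= /H + <-]]. Qed.

Lemma induced_norm_ge0 M : 0 <= nrm M.
Proof. exact: le_trans (vnorm_ge0 _) (induced_norm_ub M vnorm_unit0). Qed.

Lemma vnorm_mulmx_le M x : N (M *m x) <= nrm M * N x.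
Proof.
have [->|x0] := eqVneq x 0; first by rewrite mulmx0 vnorm0 mulr0.
have Nx0 := vnorm_gt0 x0.
have := @induced_norm_ub M ((N x)^-1 *: x).
rewrite -scalemxAr !vnormZ normfV ger0_norm ?vnorm_ge0 // mulVf ?gt_eqF // => /(_ erefl).
by rewrite ler_pdivrMl // mulrC.
Qed.

Lemma induced_norm_scalar M c : (forall x, M *m x = c *: x) -> nrm M = `|c|.
Proof.
move=> Mc; apply/eqP; rewrite eq_le; apply/andP; split.
  by apply: induced_norm_le => x x1; rewrite Mc vnormZ x1 mulr1.
by have := induced_norm_ub M vnorm_unit0; rewrite Mc vnormZ vnorm_unit0 mulr1.
Qed.

Lemma induced_norm1 : nrm (1%:M) = 1.
Proof. by rewrite (@induced_norm_scalar _ 1) ?normr1 // => x; rewrite mul1mx scale1r. Qed.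

Lemma induced_normD A (B : 'M[R]_n) : nrm (A + B) <= nrm A + nrm B.
Proof.
apply: induced_norm_le => x x1; rewrite mulmxDl; apply: le_trans (vnormD _ _) _.
by apply: lerD; apply: induced_norm_ub.
Qed.

Lemma induced_normZ a A : nrm (a *: A) = `|a| * nrm A.
Proof.
have [->|a0] := eqVneq a 0.
  rewrite scale0r normr0 mul0r (@induced_norm_scalar _ 0) ?normr0 // => x.
  by rewrite mul0mx scale0r.
apply/eqP; rewrite eq_le; apply/andP; split.
  by apply: induced_norm_le => x x1; rewrite -scalemxAl vnormZ ler_wpM2l ?induced_norm_ub.
rewrite -ler_pdivlMl ?normr_gt0 //; apply: induced_norm_le => x x1.
by rewrite ler_pdivlMl ?normr_gt0 // -vnormZ scalemxAl induced_norm_ub.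
Qed.

Lemma induced_normM A (B : 'M[R]_n) : nrm (A *m B) <= nrm A * nrm B.
Proof.
apply: induced_norm_le => x x1; rewrite -mulmxA; apply: le_trans (vnorm_mulmx_le _ _) _.
by rewrite ler_wpM2l ?induced_norm_ge0 ?induced_norm_ub.
Qed.

Definition measure_quotient A e := (nrm (1%:M + e *: A) - 1) / e.
Local Notation q := measure_quotient.
Local Notation mu := (matrix_measure N).

Lemma measure_quotient_ge A e : 0 < e -> - nrm A <= q A e.
Proof.
move=> e0; rewrite /q ler_pdivlMr // mulNr lerBrDl.
have := induced_normD (1%:M + e *: A) (- e *: A).
rewrite induced_normZ normrN gtr0_norm // scaleNr addrK induced_norm1.
by rewrite mulrC lerBlDr.
Qed.

Lemma measure_quotient_nondecreasing A s t : 0 < s -> s <= t -> q A s <= q A t.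
Proof.
move=> s0 st; have t0 := lt_le_trans s0 st.
have st0 : 0 <= s / t by rewrite divr_ge0 // ltW.
have st1 : s / t <= 1 by rewrite ler_pdivrMr // mul1r.
have E : 1%:M + s *: A = (s / t) *: (1%:M + t *: A) + (1 - s / t) *: 1%:M.
  by rewrite scalerDr scalerA divfK ?gt_eqF // addrAC -scalerDl subrKC scale1r.
have : nrm (1%:M + s *: A) <= s / t * nrm (1%:M + t *: A) + (1 - s / t).
  rewrite E; apply: le_trans (induced_normD _ _) _.
  by rewrite !induced_normZ induced_norm1 mulr1 !ger0_norm ?subr_ge0.
rewrite /q ler_pdivrMr // mulrAC -[_ / t * s]mulrA mulrBl mul1r.
set a := nrm _; set b := nrm _; lra.
Qed.

Let quotients A := [set q A e | e in `]0, +oo[].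

Let quotients_has_lbound A : has_lbound (quotients A).
Proof.
by exists (- nrm A) => _ [e + <-]; rewrite /= in_itv /= andbT; apply: measure_quotient_ge.
Qed.

Let quotients_neq0 A : quotients A !=set0.
Proof. by exists (q A 1), 1 => //=; rewrite in_itv /= ltr01. Qed.

Lemma matrix_measure_inf A : mu A = inf (quotients A).
Proof.
apply: cvg_lim => //; apply: nondecreasing_at_right_cvgr => //.
  by move=> s t; rewrite !in_itv /= !andbT => s0 _; apply: measure_quotient_nondecreasing.
exact: quotients_has_lbound.
Qed.

Lemma matrix_measure_le A e : 0 < e -> mu A <= q A e.
Proof.
move=> e0; rewrite matrix_measure_inf; apply: ge_inf; first exact: quotients_has_lbound.
by exists e; rewrite //= in_itv /= e0.
Qed.

Lemma matrix_measure_ge A c : (forall e, 0 < e -> c <= q A e) -> c <= mu A.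
Proof.
move=> H; rewrite matrix_measure_inf; apply: lb_le_inf; first exact: quotients_neq0.
by move=> _ [e + <-]; rewrite /= in_itv /= andbT; apply: H.
Qed.

Lemma matrix_measure_lt A c : mu A < c ->
  exists2 e0, 0 < e0 & forall e, 0 < e -> e <= e0 -> q A e < c.
Proof.
rewrite matrix_measure_inf => /(inf_lt (quotients_neq0 A))[_ [e0 + <-]].
rewrite /= in_itv /= andbT => e00 h; exists e0 => // e e0' ee.
exact: le_lt_trans (measure_quotient_nondecreasing A e0' ee) h.
Qed.

Lemma measure_quotientD A B e : 0 < e -> q (A + B) (e / 2) <= q A e + q B e.
Proof.
move=> e0.
have E : 1%:M + (e / 2) *: (A + B) =
         2^-1 *: (1%:M + e *: A) + 2^-1 *: (1%:M + e *: B).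
  by apply/matrixP => i j; rewrite !mxE; field.
have : nrm (1%:M + (e / 2) *: (A + B)) <=
       2^-1 * nrm (1%:M + e *: A) + 2^-1 * nrm (1%:M + e *: B).
  rewrite E; apply: le_trans (induced_normD _ _) _.
  by rewrite !induced_normZ gtr0_norm ?invr_gt0.
rewrite /q; set c := nrm _; set a := nrm _; set b := nrm _ => h.
have -> : (c - 1) / (e / 2) = 2 * (c - 1) / e by field; rewrite gt_eqF.
have -> : (a - 1) / e + (b - 1) / e = (a + b - 2) / e by field; rewrite gt_eqF.
rewrite ler_pM2r ?invr_gt0 //; lra.
Qed.

Lemma matrix_measureD A B : mu (A + B) <= mu A + mu B.
Proof.
have H s t : 0 < s -> 0 < t -> mu (A + B) <= q A s + q B t.
  move=> s0 t0; set m := Num.min s t.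
  have m0 : 0 < m by rewrite lt_min s0.
  apply: le_trans (matrix_measure_le _ (divr_gt0 m0 (ltr0Sn _ 1))) _.
  apply: le_trans (measure_quotientD _ _ m0) _.
  by apply: lerD; apply: measure_quotient_nondecreasing; rewrite // ge_min lexx ?orbT.
rewrite -lerBlDr; apply: matrix_measure_ge => s s0.
rewrite lerBlDr -lerBlDl; apply: matrix_measure_ge => t t0.
by rewrite lerBlDl; apply: H.
Qed.

Lemma matrix_measure_scalar a : mu a%:M = a.
Proof.
have qa e : q a%:M e = (`|1 + e * a| - 1) / e.
  rewrite /q (@induced_norm_scalar _ (1 + e * a)) // => x.
  by rewrite mulmxDl mul1mx -scalemxAl mul_scalar_mx scalerA scalerDl scale1r.
apply/eqP; rewrite eq_le; apply/andP; split.
  have e0 : 0 < (`|a| + 1)^-1 by rewrite invr_gt0 ltr_wpDl.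
  apply: le_trans (matrix_measure_le _ e0) _; rewrite qa ger0_norm.
    by rewrite addrAC subrr add0r mulrAC divff ?gt_eqF // mul1r.
  have : `|(`|a| + 1)^-1 * a| <= 1.
    by rewrite normrM gtr0_norm // mulrC ler_pdivrMr ?ltr_wpDl // mul1r lerDl.
  by rewrite ler_norml => /andP[+ _]; lra.
apply: matrix_measure_ge => e e0; rewrite qa ler_pdivlMr // lerBrDl mulrC.
exact: ler_norm.
Qed.

Lemma matrix_measureZ s A : 0 < s -> mu (s *: A) = s * mu A.
Proof.
move=> s0; have qs e : 0 < e -> q (s *: A) e = s * q A (e * s).
  by move=> e0; rewrite /q scalerA; field; rewrite !gt_eqF.
apply/eqP; rewrite eq_le; apply/andP; split.
  rewrite -ler_pdivrMl //; apply: matrix_measure_ge => e e0.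
  rewrite ler_pdivrMl // (_ : s * q A e = q (s *: A) (e / s)); last first.
    by rewrite qs ?divr_gt0 // divfK ?gt_eqF.
  by apply: matrix_measure_le; rewrite divr_gt0.
apply: matrix_measure_ge => e e0; rewrite qs // ler_pM2l //.
by apply: matrix_measure_le; rewrite mulr_gt0.
Qed.

Lemma matrix_measure_diag_ge D i : is_diag_mx D -> D i i <= mu D.
Proof.
move=> Ddiag; apply: matrix_measure_ge => e e0.
set ei : 'cV[R]_n := delta_mx i 0.
have ei_neq0 : ei != 0.
  by apply/eqP => /matrixP /(_ i 0); rewrite !mxE !eqxx => /eqP; rewrite oner_eq0.
have Dei : D *m ei = D i i *: ei.
  apply/matrixP => k l; rewrite (ord1 l) mul_diag_col // !mxE.
  by case: eqP => [->|_]; rewrite ?mulr0.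
have Eei : (1%:M + e *: D) *m ei = (1 + e * D i i) *: ei.
  by rewrite mulmxDl mul1mx -scalemxAl Dei scalerA scalerDl scale1r.
have := vnorm_mulmx_le (1%:M + e *: D) ei.
rewrite Eei vnormZ ler_pM2r ?vnorm_gt0 // => h.
by rewrite /q ler_pdivlMr // lerBrDl mulrC; apply: le_trans h; apply: ler_norm.
Qed.

Definition admissible := forall D, diag_nonneg D -> mu (- D) <= 0.
Definition max_diag_measure := forall D, diag_nonneg D -> mu D = max_diag D.
Definition stable_under_diag_shift := exists A, forall D, diag_nonneg D -> mu (A - D) < 0.

Lemma orthant_monotonic_max_diag_measure : orthant_monotonic N -> max_diag_measure.
Proof.
move=> OM D [/is_diag_mxP Ddiag Dge0]; set m := max_diag D.
have m0 : 0 <= m := le_trans (Dge0 (Ordinal hn)) (max_diag_ge _ _).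
apply/eqP; rewrite eq_le; apply/andP; split; last first.
  apply: max_diag_le => [|i]; last exact: matrix_measure_diag_ge.
  exact: le_trans (Dge0 (Ordinal hn)) (matrix_measure_diag_ge _ Ddiag).
apply: le_trans (matrix_measure_le D ltr01) _.
rewrite /q scale1r divr1 lerBlDl; apply: induced_norm_le => x x1.
have <- : N ((1 + m) *: x) = 1 + m by rewrite vnormZ x1 mulr1 ger0_norm ?addr_ge0.
apply: OM => i.
have -> : ((1%:M + D) *m x) i 0 = (1 + D i i) * x i 0.
  by rewrite mulmxDl mul1mx mxE mul_diag_col // mulrDl mul1r.
rewrite mxE; split; first by rewrite mulrACA mulr_ge0 ?sqr_ge0 ?mulr_ge0 ?addr_ge0.
by rewrite !normrM ler_wpM2r // !ger0_norm ?addr_ge0 // lerD2l max_diag_ge.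
Qed.

Lemma max_diag_measure_admissible : max_diag_measure -> admissible.
Proof.
move=> H3 D [Ddiag Dge0]; set m := max_diag D.
have mDge0 : diag_nonneg (m%:M - D).
  split=> [i j ij|i]; first by rewrite !mxE Ddiag // (negPf ij) subr0.
  by rewrite !mxE eqxx subr_ge0 max_diag_ge.
have -> : - D = (m%:M - D) + (- m)%:M by rewrite raddfN addrAC subrr add0r.
apply: le_trans (matrix_measureD _ _) _.
rewrite matrix_measure_scalar H3 // subr_le0; apply: max_diag_le => [|i].
  exact: le_trans (Dge0 (Ordinal hn)) (max_diag_ge _ _).
by rewrite !mxE eqxx gerBl.
Qed.

Lemma max_diag_measure_stable : max_diag_measure -> stable_under_diag_shift.
Proof.
move=> H3; exists (-1)%:M => D DD; rewrite addrC.
apply: le_lt_trans (matrix_measureD _ _) _.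
by rewrite matrix_measure_scalar ltrBlDr add0r (le_lt_trans (max_diag_measure_admissible H3 DD)).
Qed.

Lemma stable_under_diag_shift_admissible : stable_under_diag_shift -> admissible.
Proof.
move=> [A HA] D [Ddiag Dge0]; rewrite leNgt; apply/negP => muD0.
have Hs s : 0 < s -> s * mu (- D) < mu (- A).
  move=> s0; have sD : diag_nonneg (s *: D).
    split=> [i j ij|i]; rewrite mxE; first by rewrite Ddiag ?mulr0.
    exact: mulr_ge0 (ltW s0) (Dge0 i).
  rewrite -matrix_measureZ // scalerN (_ : - (s *: D) = (A - s *: D) + - A).
    by apply: le_lt_trans (matrix_measureD _ _) _; rewrite gtrDr HA.
  by rewrite addrAC subrr add0r.
have := Hs _ (divr_gt0 (ltr_wpDl (normr_ge0 (mu (- A))) ltr01) muD0).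
by rewrite divfK ?gt_eqF // ltNge (le_trans (ler_norm _)) // lerDl.
Qed.

Lemma coord_scale_expr_le i v k : nrm (coord_scale i (v ^+ k)) <= nrm (coord_scale i v) ^+ k.
Proof.
elim: k => [|k IH]; first by rewrite expr0 coord_scale1 induced_norm1.
rewrite !exprS -coord_scaleM; apply: le_trans (induced_normM _ _) _.
by rewrite ler_wpM2l ?induced_norm_ge0.
Qed.

Lemma admissible_coord_scale_near1 i : admissible -> forall d, 0 < d -> exists2 e, 0 < e &
  forall v, 1 - e <= v -> v < 1 -> nrm (coord_scale i v) <= 1 + d * (1 - v).
Proof.
move=> H2 d d0.
have [e e0 He] := matrix_measure_lt (le_lt_trans (H2 _ (diag_nonneg_delta R i)) d0).
exists e => // v ve v1; have := He (1 - v) (ltac:(by rewrite subr_gt0)) (ltac:(lra)).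
rewrite /q coord_scaleE scalerN -scaleNr opprB ltr_pdivrMr ?subr_gt0 //.
by rewrite mulrC ltrBlDl => /ltW.
Qed.

Lemma admissible_coord_scale_le1 i u : admissible -> 0 <= u <= 1 -> nrm (coord_scale i u) <= 1.
Proof.
move=> H2 /andP[u0 u1].
have Hlt v : 0 < v < 1 -> nrm (coord_scale i v) <= 1.
  move=> v01; apply: (@le1_of_pow_submul _ (fun v => nrm (coord_scale i v))) v01 => [w|w k|].
  - exact: induced_norm_ge0.
  - exact: coord_scale_expr_le.
  - exact: admissible_coord_scale_near1.
have [u_lt1|u_eq1] := ltP u 1; last first.
  by rewrite (_ : u = 1) ?coord_scale1 ?induced_norm1 //; apply/eqP; rewrite eq_le u1 u_eq1.
have [u_gt0|u_eq0] := ltP 0 u; first by apply: Hlt; rewrite u_gt0.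
have -> : u = 0 by apply/eqP; rewrite eq_le u_eq0 u0.
apply/ler_addgt0Pr => eta eta0; set K := nrm (delta_mx i i : 'M[R]_n).
have K0 : 0 <= K := induced_norm_ge0 _.
set v := Num.min 2^-1 (eta / (K + 1)).
have v0 : 0 < v by rewrite lt_min invr_gt0 ltr0Sn divr_gt0 // ltr_wpDl.
have vK : v * K <= eta.
  apply: le_trans (_ : eta / (K + 1) * K <= eta).
    by rewrite ler_wpM2r // ge_min lexx orbT.
  by rewrite mulrAC ler_pdivrMr ?ltr_wpDl // ler_pM2l // lerDl.
have -> : coord_scale i 0 = coord_scale i v + (- v) *: delta_mx i i.
  by rewrite !coord_scaleE -addrA -scalerDl; congr (_ + _ *: _); lra.
apply: le_trans (induced_normD _ _) _; rewrite induced_normZ normrN gtr0_norm //.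
have v1 : v < 1.
  by apply: le_lt_trans (_ : v <= 2^-1) _; rewrite ?ge_min ?lexx // invf_lt1 ?ltr1n.
by apply: lerD vK; apply: Hlt; rewrite v0 v1.
Qed.

Lemma admissible_orthant_monotonic : admissible -> orthant_monotonic N.
Proof.
move=> H2; apply: orthant_monotonic_coord_scale => i u x u01.
apply: le_trans (vnorm_mulmx_le _ _) _.
by rewrite ler_piMl ?vnorm_ge0 ?admissible_coord_scale_le1.
Qed.
End MatrixMeasure.

Theorem theorem1 (R : realType) (n : nat) (hn : (0 < n)%N)
  (N : 'cV[R]_n -> R) (hN : is_vnorm N) :
  (orthant_monotonic N <->
     (forall D : 'M[R]_n, diag_nonneg D -> matrix_measure N (- D) <= 0)) /\
  ((forall D : 'M[R]_n, diag_nonneg D -> matrix_measure N (- D) <= 0) <->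
     (forall D : 'M[R]_n, diag_nonneg D -> matrix_measure N D = max_diag D)) /\
  ((forall D : 'M[R]_n, diag_nonneg D -> matrix_measure N D = max_diag D) <->
     (exists A : 'M[R]_n,
        forall D : 'M[R]_n, diag_nonneg D -> matrix_measure N (A - D) < 0)).
Proof.
have h13 := orthant_monotonic_max_diag_measure hN hn.
have h32 := max_diag_measure_admissible hN hn.
have h34 := max_diag_measure_stable hN hn.
have h42 := stable_under_diag_shift_admissible hN hn.
have h21 := admissible_orthant_monotonic hN hn.
split; [split | split; split] => [/h13/h32 | | /h21/h13 | | | /h42/h21/h13] //.
Qed.
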